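(* Let $\epsilon\in[0,1]$ and let $\boldsymbol{g}_t,\boldsymbol{\mu}_t,\Delta_t\in\mathbb{R}^d$ satisfy $\boldsymbol{g}_t^\top\Delta_t>0$, $\boldsymbol{\mu}_t\perp\boldsymbol{g}_t$ and $\boldsymbol{\mu}_t\perp\Delta_t$. Then (whenever the denominators are nonzero) $$\frac{(1-\epsilon)\|\boldsymbol{g}_t\|^2+\boldsymbol{g}_t^\top\Delta_t}{\|(1-\epsilon)\boldsymbol{g}_t+\epsilon\boldsymbol{\mu}_t+\Delta_t\|}+\frac{(1-\epsilon)\|\boldsymbol{g}_t\|^2-\boldsymbol{g}_t^\top\Delta_t}{\|(1-\epsilon)\boldsymbol{g}_t+\epsilon\boldsymbol{\mu}_t-\Delta_t\|}\ge0.$$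
   Context: The condition $\boldsymbol{g}_t^\top\Delta_t>0$ means $\Delta_t$ lies in the open half-space $H_+=\{v:\boldsymbol{g}_t^\top v>0\}$. *)

From HB Require Import structures.
From mathcomp Require Import all_boot all_order all_algebra.
Set Implicit Arguments. Unset Strict Implicit. Unset Printing Implicit Defensive.
Import Order.TTheory GRing.Theory Num.Theory.
Local Open Scope ring_scope.

Definition dotv (R : rcfType) (d : nat) (u v : 'rV[R]_d) : R :=
  \sum_(i < d) u 0 i * v 0 i.

Definition enorm (R : rcfType) (d : nat) (v : 'rV[R]_d) : R :=
  Num.sqrt (dotv v v).

From mathcomp Require Import all_boot all_order all_algebra.
From mathcomp Require Import ring lra.
Set Implicit Arguments. Unset Strict Implicit. Unset Printing Implicit Defensive.
Import Order.TTheory GRing.Theory Num.Theory.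
Local Open Scope ring_scope.

(* With a := 1 - eps, the vector v := a g + eps mu satisfies v.D = a (g.D) and
   |v|^2 >= a^2 |g|^2, and only these two facts are used.  Write n = |g|^2,
   c = g.D > 0 and K = |v|^2 + |D|^2, so that |v +- D|^2 = K +- 2ac.  If
   an >= c both terms are nonnegative.  Otherwise the claim reduces to
   (c - an) |v + D| <= (an + c) |v - D| between nonnegative numbers, and
   the difference of the squares is 4ac (nK - (an)^2 - c^2), which is
   nonnegative by |v|^2 >= a^2 n and Cauchy-Schwarz (c^2 <= n |D|^2). *)

Section InnerProduct.
Variables (R : rcfType) (d : nat).
Implicit Types (u v w : 'rV[R]_d) (a : R).

Lemma dotvC u v : dotv u v = dotv v u.
Proof. by apply: eq_bigr => i _; rewrite mulrC. Qed.

Lemma dotvDl u v w : dotv (u + v) w = dotv u w + dotv v w.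
Proof. by rewrite /dotv -big_split; apply: eq_bigr => i _; rewrite mxE mulrDl. Qed.

Lemma dotvBl u v w : dotv (u - v) w = dotv u w - dotv v w.
Proof. by rewrite /dotv -sumrB; apply: eq_bigr => i _; rewrite !mxE mulrBl. Qed.

Lemma dotvZl a u w : dotv (a *: u) w = a * dotv u w.
Proof. by rewrite /dotv mulr_sumr; apply: eq_bigr => i _; rewrite mxE mulrA. Qed.

Lemma dotvDr u v w : dotv w (u + v) = dotv w u + dotv w v.
Proof. by rewrite dotvC dotvDl !(dotvC w). Qed.

Lemma dotvBr u v w : dotv w (u - v) = dotv w u - dotv w v.
Proof. by rewrite dotvC dotvBl !(dotvC w). Qed.

Lemma dotvZr a u w : dotv w (a *: u) = a * dotv w u.
Proof. by rewrite dotvC dotvZl dotvC. Qed.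

Lemma dotv0l w : dotv 0 w = 0.
Proof. by rewrite -(scale0r 0) dotvZl mul0r. Qed.

Lemma dotv_ge0 u : 0 <= dotv u u.
Proof. by apply: sumr_ge0 => i _; rewrite -expr2 sqr_ge0. Qed.

Lemma dotv_eq0 u : (dotv u u == 0) = (u == 0).
Proof.
apply/idP/eqP => [|->]; last by rewrite dotv0l.
rewrite psumr_eq0 => [/allP u0|i _]; last by rewrite -expr2 sqr_ge0.
apply/rowP => i; rewrite mxE.
by apply/eqP; rewrite -sqrf_eq0 expr2 (eqP (u0 i (mem_index_enum i))).
Qed.

Lemma enorm_sqr u : enorm u ^+ 2 = dotv u u.
Proof. by rewrite sqr_sqrtr // dotv_ge0. Qed.

Lemma dotv_CauchySchwarz u v : dotv u v ^+ 2 <= dotv u u * dotv v v.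
Proof.
have [/eqP|uu_neq0] := eqVneq (dotv u u) 0.
  by rewrite dotv_eq0 => /eqP ->; rewrite !dotv0l expr0n mul0r.
have uu_gt0 : 0 < dotv u u by rewrite lt_def uu_neq0 dotv_ge0.
rewrite -subr_ge0 -(pmulr_rge0 _ uu_gt0).
have := dotv_ge0 (dotv u u *: v - dotv u v *: u).
by rewrite !(dotvBl, dotvBr, dotvZl, dotvZr) (dotvC v u); congr (0 <= _); ring.
Qed.

End InnerProduct.

Lemma sum_ratios_ge0 (R : realFieldType) (a n c K p q : R) :
  0 <= a -> 0 <= n -> 0 < c -> 0 < p -> 0 < q ->
  p ^+ 2 = K + 2 * (a * c) -> q ^+ 2 = K - 2 * (a * c) ->
  (a * n) ^+ 2 + c ^+ 2 <= n * K ->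
  0 <= (a * n + c) / p + (a * n - c) / q.
Proof.
move=> a0 n0 c0 p0 q0 p2 q2 nK.
have an0 : 0 <= a * n by exact: mulr_ge0.
have cross : (c - a * n) * p <= (a * n + c) * q.
  have [cle|clt] := leP c (a * n).
    by apply: (@le_trans _ _ 0); [apply: mulr_le0_ge0 | apply: mulr_ge0]; lra.
  rewrite -ler_sqr ?nnegrE; try by apply: mulr_ge0; lra.
  rewrite !exprMn p2 q2 -subr_ge0.
  have -> : (a * n + c) ^+ 2 * (K - 2 * (a * c)) - (c - a * n) ^+ 2 * (K + 2 * (a * c))
      = 4 * (a * c) * (n * K - ((a * n) ^+ 2 + c ^+ 2)) by ring.
  by rewrite !mulr_ge0 ?subr_ge0 //; lra.
rewrite addf_div ?gt_eqF // divr_ge0 ?mulr_ge0 //; lra.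
Qed.

Lemma enorm_sum_ratios_ge0 (R : rcfType) (d : nat) (a : R) (g v D : 'rV[R]_d) :
  0 <= a -> 0 < dotv g D ->
  dotv v D = a * dotv g D -> a ^+ 2 * enorm g ^+ 2 <= dotv v v ->
  enorm (v + D) != 0 -> enorm (v - D) != 0 ->
  0 <= (a * enorm g ^+ 2 + dotv g D) / enorm (v + D)
     + (a * enorm g ^+ 2 - dotv g D) / enorm (v - D).
Proof.
move=> a0 c0 vD vv p0 q0.
rewrite enorm_sqr in vv *.
apply: (@sum_ratios_ge0 _ a _ _ (dotv v v + dotv D D)) => //.
- exact: dotv_ge0.
- by rewrite lt_def p0 sqrtr_ge0.
- by rewrite lt_def q0 sqrtr_ge0.
- by rewrite enorm_sqr !(dotvDl, dotvDr) (dotvC D v) vD; ring.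
- by rewrite enorm_sqr !(dotvBl, dotvBr) (dotvC D v) vD; ring.
have n0 := dotv_ge0 g; have CS := dotv_CauchySchwarz g D.
have : dotv g g * (a ^+ 2 * dotv g g) <= dotv g g * dotv v v by rewrite ler_wpM2l.
by rewrite mulrDr; lra.
Qed.

Theorem lemma2 (R : rcfType) (d : nat) (eps : R) (g mu D : 'rV[R]_d) :
  0 <= eps -> eps <= 1 ->
  0 < dotv g D ->
  dotv mu g = 0 -> dotv mu D = 0 ->
  enorm ((1 - eps) *: g + eps *: mu + D) != 0 ->
  enorm ((1 - eps) *: g + eps *: mu - D) != 0 ->
  0 <= ((1 - eps) * enorm g ^+ 2 + dotv g D) / enorm ((1 - eps) *: g + eps *: mu + D)
     + ((1 - eps) * enorm g ^+ 2 - dotv g D) / enorm ((1 - eps) *: g + eps *: mu - D).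
Proof.
move=> eps0 eps1 gD mug muD.
apply: enorm_sum_ratios_ge0 => //; first by rewrite subr_ge0.
  by rewrite dotvDl !dotvZl muD mulr0 addr0.
have vv : dotv ((1 - eps) *: g + eps *: mu) ((1 - eps) *: g + eps *: mu)
    = (1 - eps) ^+ 2 * dotv g g + eps ^+ 2 * dotv mu mu.
  by rewrite !(dotvDl, dotvDr, dotvZl, dotvZr) (dotvC g mu) mug; ring.
by rewrite vv enorm_sqr lerDl mulr_ge0 ?sqr_ge0 ?dotv_ge0.
Qed.
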